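(* Let $\Theta$ be a finite set, $b$ a belief function on $\Theta$ with mass function $m_b$, and $\emptyset \subsetneq A \subseteq \Theta$. The set of $L_1$ conditional belief functions of $b$ with respect to $A$ in the mass space (the minimizers of $\|\vec{m}_b - \vec{m}_a\|_{L_1}$ over $\vec{m}_a \in \mathcal{M}_A$) is the simplex \[ \mathcal{M}_{L_1,A}[b] = Cl\big(\vec{m}[b]|_{L_1}^B A,\ \emptyset \subsetneq B \subseteq A\big), \] where, for each $\emptyset\subsetneq B\subseteq A$, the vertex $\vec{m}[b]|_{L_1}^B A$ is the mass vector $\vec{m}_a\in\mathcal{M}_A$ with \[ m_a(B) = m_b(B) + 1 - b(A) = m_b(B) + pl_b(A^c), \qquad m_a(X) = m_b(X)\ \ \forall\, \emptyset \subsetneq X \subsetneq A,\ X \neq B. \]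
   Context: A mass function on a finite set $\Theta$ is $m:2^\Theta\to[0,1]$ with $m(\emptyset)=0$ and $\sum_{A\subseteq\Theta} m(A)=1$; the associated belief function is $b(A)=\sum_{B\subseteq A} m_b(B)$ and plausibility $pl_b(A)=1-b(A^c)$. The mass vector of $b$ is $\vec{m}_b=[m_b(B)]_{\emptyset\subsetneq B\subseteq\Theta}\in\mathbb{R}^{2^{|\Theta|}-1}$. For $\emptyset\subsetneq A\subseteq\Theta$, $\mathcal{M}_A$ is the set of mass vectors of belief functions all of whose focal elements (subsets of nonzero mass) are subsets of $A$; in particular such vectors have zero coordinates outside subsets of $A$ and coordinates over subsets of $A$ summing to $1$. $Cl(\cdot)$ denotes convex hull. The $L_1$ distance is $\|\vec{m}_b-\vec{m}_{b'}\|_{L_1}=\sum_{\emptyset\subsetneq B\subseteq\Theta}|m_b(B)-m_{b'}(B)|$. *)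

From HB Require Import structures.
From mathcomp Require Import all_boot all_order all_algebra.
From mathcomp Require Import reals.
Set Implicit Arguments. Unset Strict Implicit. Unset Printing Implicit Defensive.
Import Order.TTheory GRing.Theory Num.Theory.
Local Open Scope ring_scope.

(* A mass vector is represented as a function
   {set T} -> R; its value at set0 is 0 by convention (the vector proper is
   indexed by nonempty subsets only). *)

Section Defs.
Variables (R : realType) (T : finType).

Definition is_mass (m : {set T} -> R) : Prop :=
  [/\ m set0 = 0, (forall B : {set T}, 0 <= m B) & \sum_(B : {set T}) m B = 1].

Definition bel (m : {set T} -> R) (A : {set T}) : R :=
  \sum_(B : {set T} | B \subset A) m B.

Definition pl (m : {set T} -> R) (A : {set T}) : R := 1 - bel m (~: A).

Definition in_MA (A : {set T}) (m : {set T} -> R) : Prop :=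
  is_mass m /\ (forall B : {set T}, ~~ (B \subset A) -> m B = 0).

Definition L1dist (m m' : {set T} -> R) : R :=
  \sum_(B : {set T} | B != set0) `|m B - m' B|.

Definition L1vertex (mb : {set T} -> R) (A B : {set T}) (X : {set T}) : R :=
  if (X == set0) || ~~ (X \subset A) then 0
  else if X == B then mb B + 1 - bel mb A
  else mb X.

Definition in_L1_simplex (mb : {set T} -> R) (A : {set T})
    (m : {set T} -> R) : Prop :=
  exists w : {set T} -> R,
    [/\ (forall B : {set T}, 0 <= w B),
        \sum_(B : {set T} | (B != set0) && (B \subset A)) w B = 1 &
        forall X, m X = \sum_(B : {set T} | (B != set0) && (B \subset A))
                          w B * L1vertex mb A B X].

End Defs.

From HB Require Import structures.
From mathcomp Require Import all_boot all_order all_algebra.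
From mathcomp Require Import reals.
From mathcomp Require Import lra.
Import Order.TTheory GRing.Theory Num.Theory.
Set Implicit Arguments.
Unset Strict Implicit.
Unset Printing Implicit Defensive.
Local Open Scope ring_scope.

(* For [ma] in M_A the L1 distance splits into the mass of [mb] outside the
   subsets of A, which is [1 - b(A)], plus [sum |ma B - mb B|] over the
   nonempty subsets B of A.  The latter is at least [sum (ma B - mb B) =
   1 - b(A)], with equality iff [ma] dominates [mb] on every such B.  Hence
   the minimizers are exactly the masses of M_A dominating [mb] (the vertex
   at A is one), and a dominating [ma] is the convex combination of the
   vertices with weights [(ma B - mb B) / (1 - b(A))]. *)

Definition nonempty_subset {T : finType} (A B : {set T}) : bool :=
  (B != set0) && (B \subset A).

Section L1ConditionalBelief.
Variables (R : realType) (T : finType) (mb : {set T} -> R) (A : {set T}).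
Hypothesis hmb : is_mass mb.

Local Notation S := (nonempty_subset A).

Let mb0 : mb set0 = 0. Proof. by case: hmb. Qed.
Let mb_ge0 B : 0 <= mb B. Proof. by case: hmb. Qed.
Let mb_sum1 : \sum_B mb B = 1. Proof. by case: hmb. Qed.

Lemma sum_subset_nonempty (m : {set T} -> R) : m set0 = 0 ->
  \sum_(B : {set T} | B \subset A) m B = \sum_(B : {set T} | S B) m B.
Proof.
move=> m0; rewrite (bigD1 set0) ?sub0set //= m0 add0r.
by apply: eq_bigl => B; rewrite /nonempty_subset andbC.
Qed.

Lemma bel_nonempty_subset : bel mb A = \sum_(B : {set T} | S B) mb B.
Proof. exact: sum_subset_nonempty mb0. Qed.

Lemma sum_not_subset_bel :
  \sum_(B : {set T} | ~~ (B \subset A)) mb B = 1 - bel mb A.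
Proof.
rewrite /bel -mb_sum1 [X in _ = X - _](bigID (fun B : {set T} => B \subset A)).
by rewrite /= addrC addrK.
Qed.

Lemma bel_le1 : bel mb A <= 1.
Proof.
rewrite -subr_ge0 -sum_not_subset_bel.
exact: sumr_ge0.
Qed.

Lemma in_MA_sum1 (ma : {set T} -> R) :
  in_MA A ma -> \sum_(B : {set T} | S B) ma B = 1.
Proof.
case=> [[ma0 _ ma_sum1] ma_out].
rewrite -sum_subset_nonempty // -ma_sum1.
rewrite [RHS](bigID (fun B : {set T} => B \subset A)) /=.
by rewrite [X in _ = _ + X]big1 ?addr0 // => B /ma_out.
Qed.

Lemma L1dist_in_MA (ma : {set T} -> R) : in_MA A ma ->
  L1dist mb ma =
    2 * (1 - bel mb A) +
    \sum_(B : {set T} | S B) (`|ma B - mb B| - (ma B - mb B)).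
Proof.
move=> hma; have ma_sum1 := in_MA_sum1 hma; case: hma => _ ma_out.
have outside :
    \sum_(B : {set T} | (B != set0) && ~~ (B \subset A)) `|mb B - ma B|
    = 1 - bel mb A.
  rewrite -sum_not_subset_bel.
  rewrite [RHS](eq_bigl (fun B => (B != set0) && ~~ (B \subset A))); last first.
    by move=> B; case: (eqVneq B set0) => // ->; rewrite sub0set.
  by apply: eq_bigr => B /andP[_ /ma_out ->]; rewrite subr0 ger0_norm.
rewrite /L1dist (bigID (fun B : {set T} => B \subset A)) /= outside.
rewrite (eq_bigr (fun B => `|ma B - mb B|)) => [|B _]; last exact: distrC.
rewrite sumrB sumrB ma_sum1 -bel_nonempty_subset; lra.
Qed.

Lemma L1vertex_comb (w : {set T} -> R) X :
  \sum_(B : {set T} | S B) w B = 1 ->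
  \sum_(B : {set T} | S B) w B * L1vertex mb A B X =
    if S X then mb X + w X * (1 - bel mb A) else 0.
Proof.
rewrite /L1vertex => w_sum1; case SX: (S X); last first.
  have -> : (X == set0) || ~~ (X \subset A).
    move: SX; rewrite /nonempty_subset.
    by case: (X == set0); case: (X \subset A).
  by apply: big1 => B _; rewrite mulr0.
move: (SX) => /andP[/negbTE -> ->] /=.
rewrite (bigD1 X) //= eqxx (eq_bigr (fun B => w B * mb X)); last first.
  by move=> B /andP[_]; rewrite eq_sym => /negbTE ->.
have others : \sum_(B : {set T} | S B && (B != X)) w B = 1 - w X.
  by rewrite -w_sum1 [X in _ = X - _](bigD1 X) //= addrC addrK.
rewrite -mulr_suml others; lra.
Qed.

Lemma sum_dirac B0 : S B0 -> \sum_(B : {set T} | S B) (B == B0)%:R = 1 :> R.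
Proof.
move=> SB0; rewrite (bigD1 B0) //= eqxx big1 ?addr0 //.
by move=> B /andP[_ /negbTE ->].
Qed.

Lemma L1vertex_in_L1_simplex B0 :
  S B0 -> in_L1_simplex mb A (L1vertex mb A B0).
Proof.
move=> SB0; exists (fun B => (B == B0)%:R); split=> [B||X]; first exact: ler0n.
  exact: sum_dirac.
rewrite (bigD1 B0) //= eqxx mul1r big1 ?addr0 // => B /andP[_ /negbTE ->].
exact: mul0r.
Qed.

Local Notation dominates ma := (forall B, S B -> mb B <= ma B).

Lemma in_L1_simplex_dominates ma :
  in_L1_simplex mb A ma -> in_MA A ma /\ dominates ma.
Proof.
case=> w [w_ge0 w_sum1 ma_comb].
have c_ge0 : 0 <= 1 - bel mb A by rewrite subr_ge0 bel_le1.
have {}ma_comb X : ma X = if S X then mb X + w X * (1 - bel mb A) else 0.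
  by rewrite ma_comb L1vertex_comb.
split=> [|B SB]; last by rewrite ma_comb SB lerDl mulr_ge0.
split=> [|B]; last first.
  by rewrite ma_comb /nonempty_subset => /negbTE ->; rewrite andbF.
split=> [|B|]; first by rewrite ma_comb /nonempty_subset eqxx.
- by rewrite ma_comb; case: ifP => // _; rewrite addr_ge0 ?mulr_ge0.
- rewrite (eq_bigr _ (fun X _ => ma_comb X)) -big_mkcond /= big_split /=.
  by rewrite -mulr_suml w_sum1 -bel_nonempty_subset mul1r addrC subrK.
Qed.

Lemma dominates_in_L1_simplex ma : A != set0 ->
  in_MA A ma -> dominates ma -> in_L1_simplex mb A ma.
Proof.
move=> A_neq0 hma ma_ge; set c := 1 - bel mb A.
have SA : S A by rewrite /nonempty_subset A_neq0 subxx.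
have excess_sum : \sum_(B : {set T} | S B) (ma B - mb B) = c.
  by rewrite sumrB in_MA_sum1 // -bel_nonempty_subset.
have ma_out X : ~~ S X -> ma X = 0.
  case: hma => [[ma0 _ _] ma_out]; rewrite negb_and negbK.
  by case/orP=> [/eqP -> | /ma_out].
suff [w [w_ge0 w_sum1 w_excess]] : exists w : {set T} -> R,
    [/\ forall B, 0 <= w B, \sum_(B : {set T} | S B) w B = 1 &
        forall B, S B -> ma B = mb B + w B * c].
  exists w; split=> // X; rewrite L1vertex_comb //.
  by case: ifP => SX; [exact: w_excess | exact/ma_out/negbT].
have [c0 | c_neq0] := eqVneq c 0.
  (* b(A) = 1 forces ma = mb on the nonempty subsets of A, so any weights do. *)
  exists (fun B => (B == A)%:R); split=> [B||B SB]; first exact: ler0n.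
    exact: sum_dirac SA.
  have no_excess : forall B', S B' -> ma B' - mb B' = 0.
    by apply: psumr_eq0P => [B' /ma_ge|]; rewrite ?subr_ge0 // excess_sum c0.
  by rewrite c0 mulr0 addr0; apply/eqP; rewrite -subr_eq0 no_excess.
have c_gt0 : 0 < c by rewrite lt_def c_neq0 subr_ge0 bel_le1.
exists (fun B => if S B then (ma B - mb B) / c else 0); split=> [B||B SB].
- by case: ifP => // /ma_ge; rewrite -subr_ge0 => ?; rewrite divr_ge0 // ltW.
- rewrite (eq_bigr (fun B => (ma B - mb B) / c)) => [|B ->] //.
  by rewrite -mulr_suml excess_sum divff.
- by rewrite SB divfK // addrC subrK.
Qed.

Lemma L1dist_in_MA_ge ma : in_MA A ma -> 2 * (1 - bel mb A) <= L1dist mb ma.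
Proof.
move=> hma; rewrite L1dist_in_MA // lerDl.
by apply: sumr_ge0 => B _; rewrite subr_ge0 ler_norm.
Qed.

Lemma L1dist_in_MA_eq ma : in_MA A ma ->
  L1dist mb ma = 2 * (1 - bel mb A) <-> dominates ma.
Proof.
move=> hma; rewrite L1dist_in_MA //; split=> [| ma_ge]; last first.
  rewrite big1 ?addr0 // => B /ma_ge; rewrite -subr_ge0 => /normr_idP ->.
  exact: subrr.
have excess_ge0 B : S B -> 0 <= `|ma B - mb B| - (ma B - mb B).
  by rewrite subr_ge0 ler_norm.
move=> /(canRL (addKr _)); rewrite addNr => excess_sum0 B SB.
have /eqP := (psumr_eq0P excess_ge0 excess_sum0) B SB.
by rewrite subr_eq0 -subr_ge0 => /eqP/normr_idP.
Qed.

Lemma L1dist_minimal_in_MA ma : A != set0 -> in_MA A ma ->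
  (forall ma', in_MA A ma' -> L1dist mb ma <= L1dist mb ma') <-> dominates ma.
Proof.
move=> A_neq0 hma; split=> [ma_min | ma_ge ma' hma'].
  have SA : S A by rewrite /nonempty_subset A_neq0 subxx.
  have [hv v_ge] := in_L1_simplex_dominates (L1vertex_in_L1_simplex SA).
  apply/(L1dist_in_MA_eq hma)/eqP; rewrite eq_le L1dist_in_MA_ge // andbT.
  by rewrite -(proj2 (L1dist_in_MA_eq hv) v_ge) ma_min.
by rewrite (proj2 (L1dist_in_MA_eq hma) ma_ge) L1dist_in_MA_ge.
Qed.

End L1ConditionalBelief.

Theorem theorem2 (R : realType) (T : finType) (mb : {set T} -> R)
    (A : {set T}) :
  is_mass mb -> A != set0 ->
  forall ma : {set T} -> R,
    (in_MA A ma /\ (forall ma', in_MA A ma' -> L1dist mb ma <= L1dist mb ma'))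
    <-> in_L1_simplex mb A ma.
Proof.
move=> hmb A_neq0 ma; split=> [[hma ma_min] | /(in_L1_simplex_dominates hmb)].
  apply: dominates_in_L1_simplex => //.
  exact/(L1dist_minimal_in_MA hmb A_neq0 hma).
case=> hma ma_ge; split=> //.
exact/(L1dist_minimal_in_MA hmb A_neq0 hma).
Qed.
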